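(* Let $T$ be a tree rooted at a vertex $v$, let $S$ be a dominating set of $T$, let $A\subseteq a_1(S)$, let $N=N(A)\cap N_1(S)$, and set $S'=(S\setminus A)\cup N$. Suppose every vertex of $A$ has the same depth in $T$. Then (i) $|S'|\ge |S|$; (ii) every vertex of $A$, and every descendant of a vertex of $A$, is dominated by $S'$ (i.e. lies in $S'$ or is adjacent to a vertex of $S'$). If in addition $S'$ is a dominating set and every vertex of $N$ is a child of some vertex of $A$, then (iii) no vertex of $N$ is adjacent to any other vertex of $S'$, and hence $N\subseteq a(S')$; (iv) every vertex $x\in a(S)$ which lies in $S'\setminus a(S')$ is a grandchild of some vertex of $N$, and the parent of $x$ is not in $S'$.
   Context: A dominating set of a graph $G=(V,E)$ is a set $S\subseteq V$ such that every vertex is in $S$ or adjacent to a vertex of $S$. $N(v)$, $N[v]=N(v)\cup\{v\}$ are open/closed neighbourhoods, and for a set $A$, $N(A)=\bigcup_{a\in A}N(a)$. For a dominating set $S$: $a(S)=\{u\in S: S\setminus\{u\}\text{ is not dominating}\}$ (critical vertices; vertices of $S\setminus a(S)$ are called supported); $N_1(S)=\{u\in V\setminus S: |N[u]\cap S|=1\}$; $N_2(S)=\{u\in V\setminus S: |N[u]\cap S|\ge 2\}$; $a_1(S)=\{u\in a(S): N[u]\cap N_1(S)\ne\emptyset\}$; $a_2(S)=\{u\in a(S): N[u]\cap N_1(S)=\emptyset\}$. In a tree rooted at $v$, the depth of a vertex is its distance to $v$; $x$ is a descendant of $y$ if $y$ lies on the path from $x$ to $v$; child/grandchild means a descendant at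 distance one/two, and parent is the inverse of child. *)

From mathcomp Require Import all_boot all_order.
Set Implicit Arguments. Unset Strict Implicit. Unset Printing Implicit Defensive.

Section Graphs.
Variables (T : finType) (e : rel T).

Definition simple_graph : Prop := symmetric e /\ irreflexive e.

Definition connected_graph : Prop :=
  forall x y : T, exists p : seq T, path e x p /\ last x p = y.
Definition unique_simple_paths : Prop :=
  forall (x : T) (p q : seq T), path e x p -> path e x q ->
    uniq (x :: p) -> uniq (x :: q) -> last x p = last x q -> p = q.
Definition is_tree : Prop :=
  simple_graph /\ connected_graph /\ unique_simple_paths.

Definition is_dist (x y : T) (k : nat) : Prop :=
  (exists p : seq T, [/\ path e x p, last x p = y & size p = k]) /\
  (forall p : seq T, path e x p -> last x p = y -> k <= size p).

(* rooted at v: x is a descendant of y iff y lies on the (unique simple)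
   path from x to v *)
Definition descendant (v x y : T) : Prop :=
  exists p : seq T, [/\ path e x p, last x p = v, uniq (x :: p) & y \in x :: p].
Definition child (v x y : T) : Prop := descendant v x y /\ is_dist x y 1.
Definition grandchild (v x y : T) : Prop := descendant v x y /\ is_dist x y 2.
Definition depth_is (v x : T) (k : nat) : Prop := is_dist x v k.

Definition nbh (u : T) : {set T} := [set w | e u w].
Definition cnbh (u : T) : {set T} := u |: nbh u.
Definition nbhs (A : {set T}) : {set T} := \bigcup_(a in A) nbh a.

Definition dominated (S : {set T}) (u : T) : bool :=
  (u \in S) || [exists s in S, e u s].
Definition dominating (S : {set T}) : bool := [forall u, dominated S u].

Definition crit (S : {set T}) : {set T} :=
  [set u in S | ~~ dominating (S :\ u)].
Definition N1 (S : {set T}) : {set T} :=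
  [set u | (u \notin S) && (#|cnbh u :&: S| == 1)].
Definition N2 (S : {set T}) : {set T} :=
  [set u | (u \notin S) && (2 <= #|cnbh u :&: S|)].
Definition crit1 (S : {set T}) : {set T} :=
  [set u in crit S | cnbh u :&: N1 S != set0].
Definition crit2 (S : {set T}) : {set T} :=
  [set u in crit S | cnbh u :&: N1 S == set0].
End Graphs.

(* In a tree rooted at v every vertex has a unique simple path to v, and the
   paths of two adjacent vertices differ by one step, so their depths differ
   by one.  As A lies on a single level, a vertex below A has at most one
   neighbour in A, namely its parent; so if all its S-neighbours are in A it
   is an N1-neighbour of A, which gives (ii).  Each a in A is the only
   S-neighbour of its private N1-neighbour, so A injects into N: this is (i).
   When N consists of children of A it lies on a single level, hence is
   independent, and it sees no vertex of S \ A since the only S-neighbour of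
   a vertex of N is in A: this is (iii).  Finally a vertex x of S that stops
   being critical has a private neighbour w which in S' \ x is dominated by
   some n in N; then n is the parent of w and w the parent of x: this is (iv).
*)

From mathcomp Require Import all_boot all_order.
Set Implicit Arguments. Unset Strict Implicit.

Lemma is_dist1_edge (T : finType) (e : rel T) (x y : T) : is_dist e x y 1 -> e x y.
Proof.
by case=> [[[|z [|? ?]] [//= /andP[exz _] <-]]].
Qed.

Section RootPaths.
Variables (T : finType) (e : rel T) (v : T).
Hypothesis tree : is_tree e.

Definition root_path (x : T) (p : seq T) : bool :=
  [&& path e x p, last x p == v & uniq (x :: p)].

Lemma root_path_exists x : exists p, root_path x p.
Proof.
have [_ [connected _]] := tree; have [p [ep]] := connected x v.
by case: (shortenP ep) => q eq uq _ lq; exists q; rewrite /root_path eq lq eqxx uq.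
Qed.

(* [rpath x] omits [x] itself: its head is the parent of [x]. *)
Definition rpath (x : T) : seq T := xchoose (root_path_exists x).
Definition depth (x : T) : nat := size (rpath x).

Lemma rpathP x : root_path x (rpath x).
Proof. exact: xchooseP. Qed.

Lemma root_path_rpath x p : root_path x p -> p = rpath x.
Proof.
have [_ [_ unique]] := tree.
move=> /and3P[ep /eqP lp up]; have /and3P[er /eqP lr ur] := rpathP x.
by apply: (unique x) => //; rewrite lp lr.
Qed.

Lemma rpath_suffix x y : y \in rpath x -> exists p, rpath x = p ++ y :: rpath y.
Proof.
move=> yx; case: (splitPr yx) (rpathP x) => p q /and3P[].
rewrite cat_path last_cat /= => /and3P[_ _ eq] lq.
rewrite cat_uniq => /and4P[_ _ _ uq].
exists p; congr (_ ++ _ :: _).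
by apply: root_path_rpath; rewrite /root_path eq lq uq.
Qed.

Lemma mem_rpath_trans x y z : y \in rpath x -> z \in y :: rpath y -> z \in rpath x.
Proof. by case/rpath_suffix=> p -> zy; rewrite mem_cat zy orbT. Qed.

Lemma depth_lt x y : y \in rpath x -> depth y < depth x.
Proof.
by case/rpath_suffix=> p; rewrite /depth => ->; rewrite size_cat /= addnS ltnS leq_addl.
Qed.

Lemma rpath_asym x y : y \in rpath x -> x \notin rpath y.
Proof. by move=> yx; apply/negP => /depth_lt; rewrite ltnNge ltnW ?depth_lt. Qed.

Lemma rpath_cons x y : e x y -> x \notin rpath y -> rpath x = y :: rpath y.
Proof.
have [[_ irr] _] := tree.
move=> exy xNy; symmetry; apply: root_path_rpath.
have /and3P[ey ly uy] := rpathP y.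
move: uy; rewrite /root_path /= exy ey ly in_cons negb_or xNy => /andP[-> ->].
by rewrite !andbT; apply: contraTneq exy => ->; rewrite irr.
Qed.

Lemma rpath_edge x y : e x y -> rpath x = y :: rpath y \/ rpath y = x :: rpath x.
Proof.
have [[sym _] _] := tree.
move=> exy; case: (boolP (x \in rpath y)) => [xy|/(rpath_cons exy)]; last by left.
by right; apply: rpath_cons (rpath_asym xy); rewrite sym.
Qed.

Lemma depth_edge_neq x y : e x y -> depth x != depth y.
Proof.
by rewrite /depth => /rpath_edge[] ->; rewrite /= eqn_leq ltnn ?andbF.
Qed.

Lemma depth_isE x k : depth_is e v x k -> k = depth x.
Proof.
case=> [[p [ep lp <-]] min_k]; apply/eqP; rewrite eqn_leq.
have /and3P[er /eqP lr _] := rpathP x.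
rewrite /depth min_k //=; move: lp.
case: (shortenP ep) => q eq uq sub_qp lq.
have rq : root_path x q by rewrite /root_path eq lq eqxx.
by rewrite -(root_path_rpath rq) (uniq_leq_size _ sub_qp) //; case/andP: uq.
Qed.

Lemma descendantE x y : descendant e v x y <-> y \in x :: rpath x.
Proof.
split=> [[p [ep lp up yp]]|yx]; last first.
  by have /and3P[? /eqP ? ?] := rpathP x; exists (rpath x).
by rewrite -(@root_path_rpath x p) // /root_path ep lp eqxx.
Qed.

Lemma childE x y : child e v x y -> rpath x = y :: rpath y.
Proof.
have [[_ irr] _] := tree.
case=> /descendantE; rewrite in_cons => /predU1P[->|yx] /is_dist1_edge exy.
  by rewrite irr in exy.
exact: rpath_cons exy (rpath_asym yx).
Qed.

Lemma depth_child x y : child e v x y -> depth x = (depth y).+1.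
Proof. by move/childE; rewrite /depth => ->. Qed.

Lemma child_of_rpath x y : rpath x = y :: rpath y -> child e v x y.
Proof.
have /and3P[ex _ ux] := rpathP x.
move=> rx; rewrite rx /= in ex ux; case/andP: ex => exy _.
split; first by apply/descendantE; rewrite rx !inE eqxx orbT.
split=> [|[|z q] //= _ xy]; first by exists [:: y]; rewrite /= exy.
by move: ux; rewrite -xy inE eqxx.
Qed.

Lemma grandchild_of_rpath x w y :
  rpath x = w :: y :: rpath y -> grandchild e v x y.
Proof.
have /and3P[ex _ ux] := rpathP x.
move=> rx; rewrite rx /= in ex ux; case/and3P: ex => exw ewy _.
split; first by apply/descendantE; rewrite rx !inE eqxx !orbT.
split=> [|[|z [|z' q]] //= ]; first by exists [:: w; y]; rewrite /= exw ewy.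
  by move=> _ xy; move: ux; rewrite -xy !inE eqxx orbT.
case/andP=> exy _ zy; rewrite {}zy in exy.
have yx : y \in rpath x by rewrite rx !inE eqxx orbT.
have := rpath_cons exy (rpath_asym yx); rewrite rx => -[_ /(congr1 size)/= /eqP].
by rewrite eqn_leq ltnn.
Qed.

Lemma rpath_cons_depth x y a :
  e x y -> a \in x :: rpath x -> depth a = depth y -> rpath x = y :: rpath y.
Proof.
move=> exy ax day; apply: rpath_cons exy _; apply/negP => xy.
by have := depth_lt (mem_rpath_trans xy ax); rewrite day ltnn.
Qed.

Lemma rpath_edge_parent x y z :
  e x y -> rpath y = z :: rpath z -> x != z -> rpath x = y :: rpath y.
Proof.
move=> exy ry xz; case: (rpath_edge exy) => // ryx.
by move: ry; rewrite ryx => -[xz' _]; rewrite xz' eqxx in xz.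
Qed.
End RootPaths.

Section Domination.
Variables (T : finType) (e : rel T).

Lemma in_cnbh u w : (w \in cnbh e u) = (w == u) || e u w.
Proof. by rewrite /cnbh in_setU1 /nbh inE. Qed.

Lemma in_nbhsP (A : {set T}) u :
  reflect (exists2 a, a \in A & e a u) (u \in nbhs e A).
Proof.
apply: (iffP bigcupP) => -[a aA]; last by exists a; rewrite // /nbh inE.
by rewrite /nbh inE; exists a.
Qed.

Lemma dominated_nbr (S : {set T}) u s : s \in S -> e u s -> dominated e S u.
Proof. by move=> sS eus; apply/orP; right; apply/existsP; exists s; rewrite sS. Qed.

Lemma dominating_nbr (S : {set T}) u :
  dominating e S -> u \notin S -> exists2 s, s \in S & e u s.
Proof.
move=> /forallP/(_ u)/orP[->//|/existsP[s /andP[sS eus]]] _.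
by exists s.
Qed.

Lemma N1_nbr_unique (S : {set T}) u s t :
  u \in N1 e S -> s \in S -> t \in S -> e u s -> e u t -> s = t.
Proof.
rewrite inE => /andP[_ /cards1P[z uS]] sS tS eus eut.
have /[!uS] /set1P -> : s \in cnbh e u :&: S by rewrite inE in_cnbh eus orbT.
by have /[!uS] /set1P -> : t \in cnbh e u :&: S by rewrite inE in_cnbh eut orbT.
Qed.
End Domination.

Section Exchange.
Variables (T : finType) (e : rel T) (v : T) (S A : {set T}).
Hypotheses (tree : is_tree e) (domS : dominating e S) (A_crit1 : A \subset crit1 e S).

Local Notation N := (nbhs e A :&: N1 e S).
Local Notation S' := ((S :\: A) :|: N).
Local Notation depth := (depth v tree).
Local Notation rpath := (rpath v tree).

Let sym : symmetric e := tree.1.1.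

Lemma A_sub_S : A \subset S.
Proof.
by apply: subset_trans A_crit1 _; apply/subsetP => a; rewrite !inE => /andP[/andP[]].
Qed.

Lemma N_notin_S n : n \in N -> n \notin S.
Proof. by rewrite !inE => /andP[_ /andP[]]. Qed.

Lemma N_nbr_in_A n s : n \in N -> s \in S -> e n s -> s \in A.
Proof.
rewrite inE => /andP[/in_nbhsP[a aA ean] nN1] sS ens.
have aS : a \in S := subsetP A_sub_S a aA.
by rewrite (N1_nbr_unique nN1 sS aS ens) // sym.
Qed.

Lemma A_private_nbr a : a \in A -> exists2 n, n \in N & e a n.
Proof.
move=> aA; have := subsetP A_crit1 a aA; rewrite !inE => /andP[/andP[aS _] /set0Pn[n]].
rewrite inE in_cnbh inE => /andP[/predU1P[->|ean] /andP[nS nN1]].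
  by rewrite aS in nS.
by exists n; rewrite // inE inE nS nN1 !andbT; apply/in_nbhsP; exists a.
Qed.

Lemma mem_exchange x : (x \in S') = (x \in S) && (x \notin A) || (x \in N).
Proof. by rewrite in_setU in_setD andbC. Qed.

Lemma card_exchange : #|S| <= #|S'|.
Proof.
have disj : (S :\: A) :&: N = set0.
  by apply/setP => x; rewrite !inE; case: (x \in S); rewrite ?andbF.
rewrite cardsU disj cards0 subn0 -(cardsID A S) (setIidPr A_sub_S) addnC leq_add2l.
pose nbr_in_S u := odflt u [pick s in cnbh e u :&: S].
(* [a] is the only S-neighbour of its private neighbour, so [A] lies in the
   image of [N]. *)
apply: leq_trans (leq_imset_card nbr_in_S N); apply: subset_leq_card.
apply/subsetP => a aA; have [n nN ean] := A_private_nbr aA.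
apply/imsetP; exists n => //.
rewrite /nbr_in_S; case: pickP => [s /= | /(_ a)]; last first.
  by rewrite inE in_cnbh sym ean orbT (subsetP A_sub_S).
rewrite inE in_cnbh => /andP[/predU1P[-> | ens] sS].
  by rewrite (negbTE (N_notin_S nN)) in sS.
apply: (N1_nbr_unique _ (subsetP A_sub_S a aA) sS _ ens); last by rewrite sym.
by case/setIP: nN.
Qed.

Hypothesis depthA : {in A &, forall a b, depth a = depth b}.

Lemma A_nbr_unique_below x a s t : a \in A -> descendant e v x a ->
  s \in A -> t \in A -> e x s -> e x t -> s = t.
Proof.
move=> aA /(descendantE v tree) ax sA tA exs ext.
have := rpath_cons_depth exs ax (depthA aA sA).
by rewrite (rpath_cons_depth ext ax (depthA aA tA)) => -[].
Qed.

Lemma exchange_dominated x :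
  x \in A \/ (exists2 a, a \in A & descendant e v x a) -> dominated e S' x.
Proof.
case: (boolP (x \in A)) => [xA _ | xA [//|[a aA xa]]].
  have [n nN exn] := A_private_nbr xA.
  by apply: (dominated_nbr _ exn); rewrite mem_exchange nN orbT.
case: (boolP (x \in S)) => [xS | xS]; first by rewrite /dominated mem_exchange xS xA.
case: (boolP [exists s in S :\: A, e x s]) => [|/existsPn noSA].
  by case/existsP=> s /andP[sSA exs]; apply: (dominated_nbr _ exs); rewrite inE sSA.
have [s sS exs] := dominating_nbr domS xS.
have sA : s \in A by apply: contraTT exs => sA; have := noSA s; rewrite inE sA sS.
apply/orP; left; rewrite mem_exchange inE; apply/orP; right; apply/andP; split.
  by apply/in_nbhsP; exists s; rewrite // sym.
rewrite inE xS; apply/cards1P; exists s; apply/setP => z.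
rewrite in_setI in_cnbh in_set1.
apply/idP/eqP => [/andP[/predU1P[-> | exz] zS] | ->]; last by rewrite exs orbT.
  by rewrite zS in xS.
apply: (A_nbr_unique_below aA xa _ sA exz exs).
by apply: contraTT exz => zA; have := noSA z; rewrite inE zA zS.
Qed.

Hypothesis N_children : forall n, n \in N -> exists2 a, a \in A & child e v n a.

Lemma N_same_depth n m : n \in N -> m \in N -> depth n = depth m.
Proof.
move=> /N_children[a aA /depth_child ->] /N_children[b bA /depth_child ->].
by rewrite (depthA aA bA).
Qed.

Lemma N_isolated n s : n \in N -> s \in S' -> s != n -> ~~ e n s.
Proof.
move=> nN; rewrite mem_exchange => /orP[/andP[sS sNA] _ | sN _].
  by apply: contra sNA => /(N_nbr_in_A nN sS).
by apply/negP => /(depth_edge_neq v tree); rewrite (N_same_depth nN sN) eqxx.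
Qed.

Lemma N_sub_crit : N \subset crit e S'.
Proof.
apply/subsetP => n nN; have nS' : n \in S' by rewrite mem_exchange nN orbT.
rewrite inE nS'; apply/forallPn; exists n; rewrite /dominated !inE eqxx /=.
apply/existsPn => s; rewrite in_setD1; apply/negP => /andP[/andP[sn sS'] ens].
by have := N_isolated nN sS' sn; rewrite ens.
Qed.

Lemma crit_lost_witness x : x \in crit e S -> x \in S' -> x \notin crit e S' ->
  exists w n, [/\ w \notin S, w \notin N, e x w, n \in N & e w n].
Proof.
rewrite inE => /andP[xS /forallPn[w]].
rewrite /dominated negb_or => /andP[wNSx /existsPn wNnbr].
move=> xS'; rewrite inE xS' negbK => domS'x.
have xA : x \notin A.
  by move: xS'; rewrite mem_exchange xS => /orP[// | /N_notin_S]; rewrite xS.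
have noN u : u \in N -> ~~ e u x by move=> uN; apply: contra xA => /(N_nbr_in_A uN xS).
have wNS s : s \in S -> s != x -> ~~ e w s.
  by move=> sS sx; have := wNnbr s; rewrite !inE sx sS.
have nbrN s : s \in S' :\ x -> e w s -> s \in N.
  rewrite in_setD1 mem_exchange => /andP[sx /orP[/andP[sS _] | //]] ews.
  by have := wNS s sS sx; rewrite ews.
have wx : w != x.
  apply/negP => /eqP wx; rewrite {}wx in nbrN.
  have [s sS'x exs] := dominating_nbr domS'x (negbT (setD11 x S')).
  by have := noN s (nbrN s sS'x exs); rewrite sym exs.
have wS : w \notin S by move: wNSx; rewrite in_setD1 wx.
have ewx : e w x.
  have [s sS ews] := dominating_nbr domS wS.
  by case: (eqVneq s x) => [<- // | sx]; have := wNS s sS sx; rewrite ews.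
have wN : w \notin N by apply: contraL ewx => /noN.
have wS'x : w \notin S' :\ x.
  by rewrite in_setD1 mem_exchange (negbTE wS) (negbTE wN) andbF.
have [n nS'x ewn] := dominating_nbr domS'x wS'x.
by exists w, n; split => //; [rewrite sym | apply: nbrN nS'x ewn].
Qed.

Lemma crit_lost_grandchild x : x \in crit e S -> x \in S' -> x \notin crit e S' ->
  (exists2 n, n \in N & grandchild e v x n) /\ (exists p, child e v x p /\ p \notin S').
Proof.
move=> xc xS' xnc; have [w [n [wS wN exw nN ewn]]] := crit_lost_witness xc xS' xnc.
have xS : x \in S by move: xc; rewrite inE => /andP[].
have [a aA /(childE tree) rn] := N_children nN.
have rw : rpath w = n :: rpath n.
  apply: rpath_edge_parent ewn rn _.
  by apply: contraNneq wS => ->; rewrite (subsetP A_sub_S).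
have rx : rpath x = w :: rpath w.
  by apply: rpath_edge_parent exw rw _; apply: contraTneq xS => ->; exact: N_notin_S.
split; first by exists n => //; apply: (grandchild_of_rpath (w := w)); rewrite rx rw.
exists w; split; first exact: child_of_rpath.
by rewrite mem_exchange (negbTE wS) (negbTE wN).
Qed.
End Exchange.

Theorem lemma4p3 (T : finType) (e : rel T) (v : T) (S A : {set T}) :
  is_tree e ->
  dominating e S ->
  A \subset crit1 e S ->
  (exists k, forall a, a \in A -> depth_is e v a k) ->
  let N := nbhs e A :&: N1 e S in
  let S' := (S :\: A) :|: N in
  (* (i) *) #|S| <= #|S'| /\
  (* (ii) *) (forall x : T, (x \in A \/ exists2 a, a \in A & descendant e v x a) ->
                dominated e S' x) /\
  (dominating e S' -> (forall n, n \in N -> exists2 a, a \in A & child e v n a) ->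
    (* (iii) *)
    ((forall n s, n \in N -> s \in S' -> s != n -> ~~ e n s) /\ N \subset crit e S') /\
    (* (iv) *)
    (forall x, x \in crit e S -> x \in S' -> x \notin crit e S' ->
       (exists2 n, n \in N & grandchild e v x n) /\
       (exists p, child e v x p /\ p \notin S'))).
Proof.
move=> tree domS A_crit1 [k depth_k] N S'.
have depthA : {in A &, forall a b, depth v tree a = depth v tree b}.
  by move=> a b /depth_k/(depth_isE tree) <- /depth_k/(depth_isE tree) <-.
split; first exact: card_exchange.
split; first exact: exchange_dominated.
(* (iii) and (iv) hold without [S'] being dominating. *)
move=> _ N_children; split; first split.
- by move=> n s; apply: (N_isolated A_crit1 depthA N_children).
- exact: (N_sub_crit A_crit1 depthA N_children).
- by move=> x; apply: (crit_lost_grandchild tree domS A_crit1 N_children).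
Qed.
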